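(* Let $\Gamma$ be a connected, undirected graph without loops on $n$ nodes with Laplacian $\mathbf L=\mathbf K-\mathbf A$, and let $\phi_1,\dots,\phi_n$ be an orthonormal basis of $\mathbb R^n$ of eigenvectors of $\mathbf L$ with $\mathbf L\phi_i=\mu_i\phi_i$, and assume $\mu_i\neq 2$ for all $i$. For each $i$ let $\xi_i$ be a (complex) square root of $\mu_i^2-4$, $\lambda_i^+=\tfrac12(\xi_i-\mu_i)$, $\lambda_i^-=-\tfrac12(\xi_i+\mu_i)$. Let $$\mathbf G=\begin{bmatrix}\mathbf 0&\mathbf I\\-\mathbf I&-\mathbf L\end{bmatrix},$$ fix a node $h$, $F_0\in\mathbb R$ and $\omega>0$ with $\omega\neq1$, and let $\mathbf y(t)=(\mathbf x(t),\mathbf v(t))$ solve $\dot{\mathbf y}=\mathbf G\mathbf y+\mathbf b(t)$, $\mathbf y(0)=\mathbf 0$, with $\mathbf b(t)=F_0\sin(\omega t)(\mathbf 0,\mathbf e_h)^T$. Then $$\mathbf x(t)=\sum_{i=1}^n\frac{F_0\phi_i(h)}{\xi_i}\Bigg[\Big(\frac{1-(\lambda_i^-)^2}{\xi_i(\omega^2+(\lambda_i^-)^2)}+\frac{1-(\lambda_i^+)^2}{\xi_i(\omega^2+(\lambda_i^+)^2)}\Big)\sin\omega t+\Big(\frac{1}{\omega^2+(\lambda_i^-)^2}-\frac{1}{\omega^2+(\lambda_i^+)^2}\Big)\omega\cos\omega t+\frac{\omega\, e^{\lambda_i^+t}}{\omega^2+(\lambda_i^+)^2}-\frac{\omega\,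 e^{\lambda_i^-t}}{\omega^2+(\lambda_i^-)^2}\Bigg]\phi_i$$ and $$\mathbf v(t)=\sum_{i=1}^n\frac{F_0\phi_i(h)}{\xi_i}\Bigg[\Big(\frac{\lambda_i^-(1-(\lambda_i^-)^2)}{\xi_i(\omega^2+(\lambda_i^-)^2)}+\frac{\lambda_i^+(1-(\lambda_i^+)^2)}{\xi_i(\omega^2+(\lambda_i^+)^2)}\Big)\sin\omega t+\Big(\frac{\lambda_i^-}{\omega^2+(\lambda_i^-)^2}-\frac{\lambda_i^+}{\omega^2+(\lambda_i^+)^2}\Big)\omega\cos\omega t+\frac{\omega\lambda_i^+ e^{\lambda_i^+t}}{\omega^2+(\lambda_i^+)^2}-\frac{\omega\lambda_i^- e^{\lambda_i^-t}}{\omega^2+(\lambda_i^-)^2}\Bigg]\phi_i.$$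
   Context: $\mathbf A$ is the adjacency matrix, $\mathbf K$ the diagonal degree matrix, $\mathbf I,\mathbf 0$ the $n\times n$ identity and zero matrices, $\mathbf e_h$ the $h$-th standard basis vector, $\phi_i(h)$ the $h$-th component of $\phi_i$. The equation is $\ddot{\mathbf x}+\mathbf L\dot{\mathbf x}+\mathbf x=F_0\sin(\omega t)\mathbf e_h$. $\lambda_i^\pm$ are the two roots of $\lambda^2+\mu_i\lambda+1=0$. *)

From HB Require Import structures.
From mathcomp Require Import all_boot all_order all_algebra.
From mathcomp Require Import complex.
From mathcomp Require Import all_classical all_reals all_analysis.
Set Implicit Arguments. Unset Strict Implicit. Unset Printing Implicit Defensive.
Import Order.TTheory GRing.Theory Num.Theory.
Local Open Scope ring_scope.

Section Defs.
Variable R : realType.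

Definition is_simple_adjacency (n : nat) (A : 'M[R]_n) : Prop :=
  (forall i j, A i j = 0 \/ A i j = 1) /\
  (forall i j, A i j = A j i) /\
  (forall i, A i i = 0).

Definition graph_connected (n : nat) (A : 'M[R]_n) : Prop :=
  forall i j : 'I_n, connect (fun a b => A a b != 0) i j.

Definition degree_mx (n : nat) (A : 'M[R]_n) : 'M[R]_n :=
  diag_mx (\row_i \sum_j A i j).

Definition laplacian (n : nat) (A : 'M[R]_n) : 'M[R]_n := degree_mx A - A.

Definition Gmx (n : nat) (L : 'M[R]_n) : 'M[R]_(n + n) :=
  block_mx 0 1%:M (- 1%:M) (- L).

Definition forcing (n : nat) (h : 'I_n) (F0 w t : R) : 'cV[R]_(n + n) :=
  col_mx 0 ((F0 * sin (w * t)) *: delta_mx h 0).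

Definition cexp (z : R[i]) : R[i] :=
  match z with Complex a b => Complex (expR a * cos b) (expR a * sin b) end.

Definition cvC (n : nat) (u : 'cV[R]_n) : 'cV[R[i]]_n :=
  map_mx (fun r : R => Complex r 0) u.

Definition RC (r : R) : R[i] := Complex r 0.

End Defs.

(* Projected on the orthonormal eigenbasis, z_i = phi_i^T x and u_i = phi_i^T v solve the
   damped forced oscillator z' = u, u' = - z - mu_i u + F0 phi_i(h) sin (w t) with zero
   initial data, and mu_i >= 0 because L is positive semidefinite.  The complex expression
   of the statement is a combination of sin, cos, e^(lp t) and e^(lm t), a span closed under
   differentiation; since lp lm = 1 and lp + lm = - mu_i it solves the same system, its
   denominators being nonzero because mu_i != 2 (so xi_i != 0) and w != 1 (no resonance).
   For mu >= 0 the energy z^2 + u^2 of the free oscillator is nonincreasing forward in time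
   and e^(2 mu t) (z^2 + u^2) is nondecreasing, so its solution through the origin vanishes:
   the real parts of the complex solution are (z_i, u_i) and its imaginary parts vanish. *)

From HB Require Import structures.
From mathcomp Require Import all_boot all_order all_algebra.
From mathcomp Require Import complex.
From mathcomp Require Import all_classical all_reals all_analysis.
From mathcomp Require Import ring lra.
Import Order.TTheory GRing.Theory Num.Theory.
Import numFieldNormedType.Exports.
Local Open Scope ring_scope.
Set Implicit Arguments. Unset Strict Implicit. Unset Printing Implicit Defensive.


Section RealDerivatives.
Variable R : realType.
Implicit Types (f g : R -> R) (s t c : R).

Lemma is_derive_mul_cst t c : is_derive t 1 (fun s => c * s) c.
Proof. by have := is_deriveZ c (is_derive_id t 1); rewrite scaler1. Qed.

Lemma is_derive_mul f g t df dg : is_derive t 1 f df -> is_derive t 1 g dg ->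
  is_derive t 1 (fun s => f s * g s) (f t * dg + g t * df).
Proof. exact: is_deriveM. Qed.

Lemma is_derive_expR_mul t c : is_derive t 1 (fun s => expR (c * s)) (expR (c * t) * c).
Proof. exact: is_derive1_comp (is_derive_expR _) (is_derive_mul_cst _ _). Qed.

Lemma is_derive_sin_mul t c : is_derive t 1 (fun s => sin (c * s)) (cos (c * t) * c).
Proof. exact: is_derive1_comp (is_derive_sin _) (is_derive_mul_cst _ _). Qed.

Lemma is_derive_cos_mul t c : is_derive t 1 (fun s => cos (c * s)) (- sin (c * t) * c).
Proof. exact: is_derive1_comp (is_derive_cos _) (is_derive_mul_cst _ _). Qed.

Lemma is_derive_ge0_homo f (df : R -> R) :
  (forall t, is_derive t 1 f (df t)) -> (forall t, 0 <= df t) ->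
  {homo f : s t / s <= t}.
Proof.
move=> fd df_ge0 s t; rewrite le_eqVlt => /predU1P[-> //|st].
have fcont : continuous f.
  by move=> x; have [fx _] := fd x; exact/differentiable_continuous/derivable1_diffP.
have [c _ fst] := MVT st (fun x _ => fd x) (continuous_subspaceT fcont).
by rewrite -subr_ge0 fst mulr_ge0 // subr_ge0 ltW.
Qed.

Lemma damped_oscillator_eq0 (mu : R) (p q : R -> R) : 0 <= mu ->
  (forall t, is_derive t 1 p (q t)) ->
  (forall t, is_derive t 1 q (- p t - mu * q t)) -> p 0 = 0 -> q 0 = 0 ->
  forall t, p t = 0 /\ q t = 0.
Proof.
move=> mu_ge0 dp dq p0 q0 t.
pose E s := p s * p s + q s * q s.
have dE s : is_derive s 1 E (- (2 * mu * (q s * q s))).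
  apply: is_derive_eq (is_deriveD (is_derive_mul (dp s) (dp s)) (is_derive_mul (dq s) (dq s))) _.
  by ring.
have E0 : E 0 = 0 by rewrite /E p0 q0 mulr0 addr0.
suff Et : E t <= 0 by split; rewrite /E in Et; nra.
have [t_ge0|t_le0] := leP 0 t.
- have dNE s : is_derive s 1 (fun s => - E s) (2 * mu * (q s * q s)).
    by apply: is_derive_eq (is_deriveN (dE s)) _; rewrite opprK.
  have dNE_ge0 s : 0 <= 2 * mu * (q s * q s) by nra.
  have := is_derive_ge0_homo dNE dNE_ge0.
  by move/(_ 0 t t_ge0); rewrite E0 oppr0 oppr_ge0.
- pose G s := expR (2 * mu * s) * E s.
  have dG s : is_derive s 1 G (expR (2 * mu * s) * (2 * mu * (p s * p s))).
    apply: is_derive_eq (is_derive_mul (is_derive_expR_mul s (2 * mu)) (dE s)) _.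
    by rewrite /E; ring.
  have dG_ge0 s : 0 <= expR (2 * mu * s) * (2 * mu * (p s * p s)).
    by rewrite mulr_ge0 ?expR_ge0 //; nra.
  have := is_derive_ge0_homo dG dG_ge0 (ltW t_le0).
  rewrite /G E0 mulr0 => Gt; have := expR_gt0 (2 * mu * t); nra.
Qed.

End RealDerivatives.

Section RealEmbedding.
Variable R : realType.
Implicit Types a b : R.

Lemma RCD a b : RC (a + b) = RC a + RC b.
Proof. by rewrite /RC; simpc. Qed.

Lemma RCN a : RC (- a) = - RC a.
Proof. by rewrite /RC; simpc. Qed.

Lemma RCM a b : RC (a * b) = RC a * RC b.
Proof. by rewrite /RC; simpc. Qed.

Lemma RC_sqr_sub4 a : RC (a ^+ 2 - 4) = RC a ^+ 2 - 4.
Proof. by rewrite /RC; simpc. Qed.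

Lemma RC_sum I r (P : pred I) (F : I -> R) :
  RC (\sum_(i <- r | P i) F i) = \sum_(i <- r | P i) RC (F i).
Proof. exact: (big_morph (@RC R) RCD). Qed.

End RealEmbedding.

Section ComplexDerivatives.
Variable R : realType.
Implicit Types (s t : R) (k d : R[i]) (g : R -> R[i]).

Lemma complex_ReD k1 k2 : complex.Re (k1 + k2) = complex.Re k1 + complex.Re k2.
Proof. by case: k1; case: k2. Qed.

Lemma complex_ImD k1 k2 : complex.Im (k1 + k2) = complex.Im k1 + complex.Im k2.
Proof. by case: k1; case: k2. Qed.

Lemma complex_ReM k1 k2 :
  complex.Re (k1 * k2) = complex.Re k1 * complex.Re k2 - complex.Im k1 * complex.Im k2.
Proof. by case: k1; case: k2. Qed.

Lemma complex_ImM k1 k2 :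
  complex.Im (k1 * k2) = complex.Re k1 * complex.Im k2 + complex.Im k1 * complex.Re k2.
Proof. by case: k1; case: k2. Qed.

Definition is_derive_cplx g t d :=
  is_derive t 1 (fun s => complex.Re (g s)) (complex.Re d) /\
  is_derive t 1 (fun s => complex.Im (g s)) (complex.Im d).

Lemma is_derive_cplx_ext g1 g2 t d :
  g1 =1 g2 -> is_derive_cplx g1 t d -> is_derive_cplx g2 t d.
Proof. by move/funext => ->. Qed.

Lemma is_derive_cplxD g1 g2 t d1 d2 :
  is_derive_cplx g1 t d1 -> is_derive_cplx g2 t d2 ->
  is_derive_cplx (fun s => g1 s + g2 s) t (d1 + d2).
Proof.
move=> [re1 im1] [re2 im2]; split.
  have -> : (fun s => complex.Re (g1 s + g2 s))
            = (fun s => complex.Re (g1 s) + complex.Re (g2 s)).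
    by apply/funext => s; rewrite complex_ReD.
  by rewrite complex_ReD; apply: is_deriveD.
have -> : (fun s => complex.Im (g1 s + g2 s))
          = (fun s => complex.Im (g1 s) + complex.Im (g2 s)).
  by apply/funext => s; rewrite complex_ImD.
by rewrite complex_ImD; apply: is_deriveD.
Qed.

Lemma is_derive_cplxMl k g t d :
  is_derive_cplx g t d -> is_derive_cplx (fun s => k * g s) t (k * d).
Proof.
move=> [re im]; split.
  have -> : (fun s => complex.Re (k * g s)) = (fun s =>
      complex.Re k * complex.Re (g s) - complex.Im k * complex.Im (g s)).
    by apply/funext => s; rewrite complex_ReM.
  by rewrite complex_ReM; apply: is_deriveB; apply: is_deriveZ.
have -> : (fun s => complex.Im (k * g s)) = (fun s =>
    complex.Re k * complex.Im (g s) + complex.Im k * complex.Re (g s)).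
  by apply/funext => s; rewrite complex_ImM.
by rewrite complex_ImM; apply: is_deriveD; apply: is_deriveZ.
Qed.

Lemma is_derive_cplx_linear4 (L : R[i] -> R[i] -> R[i] -> R[i] -> R[i])
    g1 g2 g3 g4 d1 d2 d3 d4 t :
  (forall x1 x2 x3 x4, L x1 x2 x3 x4 =
    L 1 0 0 0 * x1 + L 0 1 0 0 * x2 + L 0 0 1 0 * x3 + L 0 0 0 1 * x4) ->
  is_derive_cplx g1 t d1 -> is_derive_cplx g2 t d2 ->
  is_derive_cplx g3 t d3 -> is_derive_cplx g4 t d4 ->
  is_derive_cplx (fun s => L (g1 s) (g2 s) (g3 s) (g4 s)) t (L d1 d2 d3 d4).
Proof.
move=> L_lin dg1 dg2 dg3 dg4; rewrite L_lin.
apply: is_derive_cplx_ext (fun s => esym (L_lin _ _ _ _)) _.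
by repeat apply: is_derive_cplxD; apply: is_derive_cplxMl.
Qed.

Lemma is_derive_cplx_RC f t df :
  is_derive t 1 f df -> is_derive_cplx (fun s => RC (f s)) t (RC df).
Proof. by move=> fd; split => //=; apply: is_derive_cst. Qed.

Lemma is_derive_cplx_sin w t :
  is_derive_cplx (fun s => RC (sin (w * s))) t (RC w * RC (cos (w * t))).
Proof. by rewrite -RCM mulrC; exact: is_derive_cplx_RC (is_derive_sin_mul t w). Qed.

Lemma is_derive_cplx_cos w t :
  is_derive_cplx (fun s => RC (cos (w * s))) t (- (RC w * RC (sin (w * t)))).
Proof. by rewrite -RCM -RCN mulrC -mulNr; exact: is_derive_cplx_RC (is_derive_cos_mul t w). Qed.

Lemma cexp0 k : cexp (k * RC 0) = 1.
Proof.
by case: k => a b; rewrite /cexp /= !mulr0 subr0 addr0 expR0 sin0 cos0 mul1r mulr0.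
Qed.

Lemma is_derive_cplx_cexp k t :
  is_derive_cplx (fun s => cexp (k * RC s)) t (k * cexp (k * RC t)).
Proof.
case: k => a b.
have cexpE s : cexp (Complex a b * RC s)
               = Complex (expR (a * s) * cos (b * s)) (expR (a * s) * sin (b * s)).
  by rewrite /cexp /= !mulr0 subr0 add0r.
apply: is_derive_cplx_ext (fun s => esym (cexpE s)) _; rewrite cexpE; split => /=.
  apply: is_derive_eq (is_derive_mul (is_derive_expR_mul t a) (is_derive_cos_mul t b)) _.
  by ring.
apply: is_derive_eq (is_derive_mul (is_derive_expR_mul t a) (is_derive_sin_mul t b)) _.
by ring.
Qed.

Lemma damped_oscillator_cplx_unique (mu : R) (g : R -> R)
    (Z U : R -> R[i]) (z u : R -> R) : 0 <= mu ->
  (forall s, is_derive_cplx Z s (U s)) ->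
  (forall s, is_derive_cplx U s (- Z s - RC mu * U s + RC (g s))) ->
  (forall s : R, is_derive s 1 z (u s)) ->
  (forall s : R, is_derive s 1 u (- z s - mu * u s + g s)) ->
  Z 0 = 0 -> U 0 = 0 -> z 0 = 0 -> u 0 = 0 ->
  forall t, RC (z t) = Z t /\ RC (u t) = U t.
Proof.
move=> mu_ge0 dZ dU dz du Z0 U0 z0 u0 t.
have [Zre Ure] : complex.Re (Z t) - z t = 0 /\ complex.Re (U t) - u t = 0.
  apply: (@damped_oscillator_eq0 _ mu (fun s => complex.Re (Z s) - z s)
    (fun s => complex.Re (U s) - u s)) => // [s|s||].
  - exact: is_deriveB (dZ s).1 (dz s).
  - apply: is_derive_eq (is_deriveB (dU s).1 (du s)) _.
    by case: (Z s) (U s) => [a b] [c d] /=; ring.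
  - by rewrite Z0 z0 subrr.
  - by rewrite U0 u0 subrr.
have [Zim Uim] : complex.Im (Z t) = 0 /\ complex.Im (U t) = 0.
  apply: (@damped_oscillator_eq0 _ mu (fun s => complex.Im (Z s))
    (fun s => complex.Im (U s))) => // [s|s||].
  - exact: (dZ s).2.
  - apply: is_derive_eq (dU s).2 _.
    by case: (Z s) (U s) => [a b] [c d] /=; ring.
  - by rewrite Z0.
  - by rewrite U0.
move: Zre Ure Zim Uim; case: (Z t) (U t) => [a b] [c d] /= Zre Ure -> ->.
by split; congr Complex; lra.
Qed.

End ComplexDerivatives.
Lemma is_derive_mxP (K : realFieldType) (V : normedModType K) m n
    (M : V -> 'M[K]_(m, n)) t v D :
  is_derive t v M D <-> forall i j, is_derive t v (fun s => M s i j) (D i j).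
Proof.
split=> [[dM <-] i j|dMij].
  apply: DeriveDef; first by move/derivable_mxP: dM; apply.
  by rewrite derive_mx // mxE.
have dM : derivable M t v by apply/derivable_mxP => i j; have [] := dMij i j.
apply: DeriveDef => //; apply/matrixP => i j.
by rewrite derive_mx // mxE; have [_ ->] := dMij i j.
Qed.

Section MatrixDerivatives.
Variable R : realType.
Implicit Types (t : R).

Lemma is_derive_mulmxl m n p (A : 'M[R]_(m, n)) (f : R -> 'M[R]_(n, p)) t df :
  is_derive t 1 f df -> is_derive t 1 (fun s => A *m f s) (A *m df).
Proof.
move/is_derive_mxP => dfij; apply/is_derive_mxP => i j.
have -> : (fun s => (A *m f s) i j) = \sum_k (fun s => A i k * f s k j).
  by rewrite fct_sumE; apply/funext => s; rewrite mxE.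
rewrite mxE; apply: is_derive_sum => k; exact: is_deriveZ.
Qed.

Lemma is_derive_usubmx m1 m2 n (f : R -> 'M[R]_(m1 + m2, n)) t df :
  is_derive t 1 f df -> is_derive t 1 (fun s => usubmx (f s)) (usubmx df).
Proof.
move/is_derive_mxP => dfij; apply/is_derive_mxP => i j.
have -> : (fun s => usubmx (f s) i j) = fun s => f s (lshift m2 i) j.
  by apply/funext => s; rewrite mxE.
by rewrite mxE.
Qed.

Lemma is_derive_dsubmx m1 m2 n (f : R -> 'M[R]_(m1 + m2, n)) t df :
  is_derive t 1 f df -> is_derive t 1 (fun s => dsubmx (f s)) (dsubmx df).
Proof.
move/is_derive_mxP => dfij; apply/is_derive_mxP => i j.
have -> : (fun s => dsubmx (f s) i j) = fun s => f s (rshift m1 i) j.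
  by apply/funext => s; rewrite mxE.
by rewrite mxE.
Qed.

End MatrixDerivatives.

Section Laplacian.
Variables (R : realType) (n : nat) (A : 'M[R]_n).
Hypotheses (A_sym : A^T = A) (A_ge0 : forall i j, 0 <= A i j).

Lemma laplacian_sym : (laplacian A)^T = laplacian A.
Proof. by rewrite /laplacian /degree_mx linearB /= tr_diag_mx A_sym. Qed.

Lemma laplacian_mul_col (u : 'cV[R]_n) j :
  (laplacian A *m u) j 0 = \sum_k A j k * (u j 0 - u k 0).
Proof.
rewrite mxE /laplacian /degree_mx.
under eq_bigr do rewrite !mxE mulrBl.
set d := \sum_k A j k.
rewrite sumrB (bigD1 j) //= eqxx mulr1n big1 ?addr0 => [|k kj].
  by under [RHS]eq_bigr do rewrite mulrBr; rewrite sumrB -mulr_suml.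
by rewrite eq_sym (negbTE kj) mulr0n mul0r.
Qed.

Lemma laplacian_form_ge0 (u : 'cV[R]_n) : 0 <= (u^T *m laplacian A *m u) 0 0.
Proof.
pose S := \sum_j \sum_k u j 0 * (A j k * (u j 0 - u k 0)).
have -> : (u^T *m laplacian A *m u) 0 0 = S.
  rewrite -mulmxA mxE; apply: eq_bigr => j _.
  by rewrite laplacian_mul_col mxE mulr_sumr.
have S_swap : S = \sum_j \sum_k u k 0 * (A j k * (u k 0 - u j 0)).
  rewrite /S exchange_big /=; apply: eq_bigr => j _; apply: eq_bigr => k _.
  by have := congr1 (fun M : 'M[R]_n => M k j) A_sym; rewrite mxE => ->.
suff : 0 <= S + S by lra.
rewrite {2}S_swap /S -big_split /=; apply: sumr_ge0 => j _.
rewrite -big_split /=; apply: sumr_ge0 => k _.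
have -> : u j 0 * (A j k * (u j 0 - u k 0)) + u k 0 * (A j k * (u k 0 - u j 0))
  = A j k * (u j 0 - u k 0) ^+ 2 by ring.
by rewrite mulr_ge0 ?sqr_ge0.
Qed.

Lemma laplacian_eigenvalue_ge0 (u : 'cV[R]_n) (mu : R) :
  u^T *m u = 1%:M -> laplacian A *m u = mu *: u -> 0 <= mu.
Proof.
move=> u_unit Lu; have := laplacian_form_ge0 u.
by rewrite -mulmxA Lu -scalemxAr u_unit mxE !mxE eqxx mulr1.
Qed.

End Laplacian.

Section ModeAlgebra.
Variable F : fieldType.
Implicit Types (lp lm xi W f S Co Ep Em : F).

Definition mode_x lp lm xi W f S Co Ep Em : F :=
  f / xi *
      ( ((1 - lm ^+ 2) / (xi * (W ^+ 2 + lm ^+ 2))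
         + (1 - lp ^+ 2) / (xi * (W ^+ 2 + lp ^+ 2))) * S
      + (1 / (W ^+ 2 + lm ^+ 2) - 1 / (W ^+ 2 + lp ^+ 2)) * W * Co
      + W * Ep / (W ^+ 2 + lp ^+ 2)
      - W * Em / (W ^+ 2 + lm ^+ 2)).

Definition mode_v lp lm xi W f S Co Ep Em : F :=
  f / xi *
      ( (lm * (1 - lm ^+ 2) / (xi * (W ^+ 2 + lm ^+ 2))
         + lp * (1 - lp ^+ 2) / (xi * (W ^+ 2 + lp ^+ 2))) * S
      + (lm / (W ^+ 2 + lm ^+ 2) - lp / (W ^+ 2 + lp ^+ 2)) * W * Co
      + W * lp * Ep / (W ^+ 2 + lp ^+ 2)
      - W * lm * Em / (W ^+ 2 + lm ^+ 2)).

Lemma mode_x_linear lp lm xi W f S Co Ep Em :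
  mode_x lp lm xi W f S Co Ep Em =
  mode_x lp lm xi W f 1 0 0 0 * S + mode_x lp lm xi W f 0 1 0 0 * Co +
  mode_x lp lm xi W f 0 0 1 0 * Ep + mode_x lp lm xi W f 0 0 0 1 * Em.
Proof. by rewrite /mode_x; ring. Qed.

Lemma mode_v_linear lp lm xi W f S Co Ep Em :
  mode_v lp lm xi W f S Co Ep Em =
  mode_v lp lm xi W f 1 0 0 0 * S + mode_v lp lm xi W f 0 1 0 0 * Co +
  mode_v lp lm xi W f 0 0 1 0 * Ep + mode_v lp lm xi W f 0 0 0 1 * Em.
Proof. by rewrite /mode_v; ring. Qed.

Lemma mode_at0 lp lm xi W f :
  mode_x lp lm xi W f 0 1 1 1 = 0 /\ mode_v lp lm xi W f 0 1 1 1 = 0.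
Proof. by rewrite /mode_x /mode_v; split; ring. Qed.

Lemma quadratic_vieta (xi m : F) : 2 != 0 :> F -> xi ^+ 2 = m ^+ 2 - 4 ->
  let lp := (xi - m) / 2 in let lm := - ((xi + m) / 2) in
  [/\ xi = lp - lm, m = - (lp + lm) & lp * lm = 1].
Proof.
move=> two_neq0 xi_sqr lp lm; rewrite /lp /lm; split; [by field|by field|].
have four_neq0 : 4 != 0 :> F by rewrite -[4]/(2 * 2)%:R natrM mulf_neq0.
have -> : (xi - m) / 2 * - ((xi + m) / 2) = (m ^+ 2 - xi ^+ 2) / 4.
  by field; rewrite four_neq0.
by rewrite xi_sqr; field.
Qed.

(* Substituting (S, Co, Ep, Em)' = (W Co, - W S, lp Ep, lm Em), this says x' = v and
   v' = - x - m v + f S. *)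
Lemma mode_ode lp lm xi m W f S Co Ep Em :
  xi = lp - lm -> m = - (lp + lm) -> lp * lm = 1 -> xi != 0 ->
  W ^+ 2 + lp ^+ 2 != 0 -> W ^+ 2 + lm ^+ 2 != 0 ->
  mode_x lp lm xi W f (W * Co) (- (W * S)) (lp * Ep) (lm * Em)
    = mode_v lp lm xi W f S Co Ep Em /\
  mode_v lp lm xi W f (W * Co) (- (W * S)) (lp * Ep) (lm * Em)
    = - mode_x lp lm xi W f S Co Ep Em - m * mode_v lp lm xi W f S Co Ep Em + f * S.
Proof.
move=> -> -> lplm xi_neq0 Wp_neq0 Wm_neq0.
have lp_neq0 : lp != 0 by apply: contra_eq_neq lplm => ->; rewrite mul0r eq_sym oner_neq0.
have lm_inv : lm = lp^-1 by rewrite -[lp^-1]mulr1 -lplm mulKf.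
subst lm.
have e1 : (W * lp) ^+ 2 + 1 = lp ^+ 2 * (W ^+ 2 + lp^-1 ^+ 2) by field.
have e2 : lp * lp - 1 = lp * (lp - lp^-1) by rewrite mulrBr mulfV.
have c1 : (W * lp) ^+ 2 + 1 != 0 by rewrite e1 mulf_neq0 ?expf_neq0.
have c2 : lp * lp - 1 != 0 by rewrite e2 mulf_neq0.
rewrite /mode_x /mode_v; split; field; by rewrite lp_neq0 c1 c2 Wp_neq0.
Qed.

End ModeAlgebra.

(* W^2 + l^2 = (l - i w)(l + i w): a root l of X^2 + mu X + 1 is +-i w only if mu = 0
   and w = 1, i.e. if the forcing is resonant. *)
Lemma nonresonant (R : realType) (mu w : R) (l l' : R[i]) : 0 < w -> w != 1 ->
  l * l' = 1 -> RC mu = - (l + l') -> RC w ^+ 2 + l ^+ 2 != 0.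
Proof.
move=> w_gt0 w_neq1 ll' muE.
have l_root : l ^+ 2 + RC mu * l + 1 = 0 by rewrite muE -ll'; ring.
case: l l_root {ll' muE} => a b l_root; apply/eqP => res.
have := congr1 (@complex.Re R) l_root; have := congr1 (@complex.Im R) l_root.
have := congr1 (@complex.Re R) res; have := congr1 (@complex.Im R) res.
rewrite !expr2 /= => res_im res_re root_im root_re {l_root res}.
have [b0|b_neq0] := eqVneq b 0; first by move: res_re; rewrite b0; nra.
have mu0 : mu = 0 by apply: (mulIf b_neq0); rewrite mul0r; lra.
move: root_re; rewrite mu0 => root_re.
by have [w_lt1|w_gt1|w_eq1] := ltgtP w 1; [nra|nra|move: w_neq1; rewrite w_eq1 eqxx].
Qed.

Lemma disc_sqrt_neq0 (R : realType) (mu : R) (xi : R[i]) : 0 <= mu -> mu != 2 ->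
  xi ^+ 2 = RC (mu ^+ 2 - 4) -> xi != 0.
Proof.
move=> mu_ge0 mu_neq2 xi_sqr; apply: contra_neq mu_neq2 => xi0.
move: xi_sqr; rewrite xi0 expr0n /= => /(congr1 (@complex.Re R)) /=.
by rewrite expr2 => mu_sqr; nra.
Qed.

Section ForcedMode.
Variables (R : realType) (mu f w : R) (xi : R[i]).
Hypotheses (mu_ge0 : 0 <= mu) (mu_neq2 : mu != 2) (xi_sqr : xi ^+ 2 = RC (mu ^+ 2 - 4)).
Hypotheses (w_gt0 : 0 < w) (w_neq1 : w != 1).

Local Notation lp := ((xi - RC mu) / 2).
Local Notation lm := (- ((xi + RC mu) / 2)).
Local Notation X s := (mode_x lp lm xi (RC w) (RC f) (RC (sin (w * s))) (RC (cos (w * s)))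
  (cexp (lp * RC s)) (cexp (lm * RC s))).
Local Notation V s := (mode_v lp lm xi (RC w) (RC f) (RC (sin (w * s))) (RC (cos (w * s)))
  (cexp (lp * RC s)) (cexp (lm * RC s))).

Lemma forced_mode_ode (S Co Ep Em : R[i]) :
  mode_x lp lm xi (RC w) (RC f) (RC w * Co) (- (RC w * S)) (lp * Ep) (lm * Em)
    = mode_v lp lm xi (RC w) (RC f) S Co Ep Em /\
  mode_v lp lm xi (RC w) (RC f) (RC w * Co) (- (RC w * S)) (lp * Ep) (lm * Em)
    = - mode_x lp lm xi (RC w) (RC f) S Co Ep Em
      - RC mu * mode_v lp lm xi (RC w) (RC f) S Co Ep Em + RC f * S.
Proof.
have two_neq0 : 2 != 0 :> R[i] by rewrite pnatr_eq0.
have [xiE muE lplm] := quadratic_vieta two_neq0 (etrans xi_sqr (RC_sqr_sub4 mu)).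
apply: mode_ode => //.
- exact: disc_sqrt_neq0 mu_ge0 mu_neq2 xi_sqr.
- exact: nonresonant w_gt0 w_neq1 lplm muE.
- apply: (nonresonant (mu := mu) (l' := lp) w_gt0 w_neq1); first by rewrite mulrC.
  by rewrite addrC.
Qed.

Lemma is_derive_cplx_mode_x s : is_derive_cplx (fun s => X s) s (V s).
Proof.
have := is_derive_cplx_linear4 (mode_x_linear lp lm xi (RC w) (RC f))
  (is_derive_cplx_sin w s) (is_derive_cplx_cos w s)
  (is_derive_cplx_cexp lp s) (is_derive_cplx_cexp lm s).
by rewrite (forced_mode_ode _ _ _ _).1.
Qed.

Lemma is_derive_cplx_mode_v s :
  is_derive_cplx (fun s => V s) s (- X s - RC mu * V s + RC (f * sin (w * s))).
Proof.
have := is_derive_cplx_linear4 (mode_v_linear lp lm xi (RC w) (RC f))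
  (is_derive_cplx_sin w s) (is_derive_cplx_cos w s)
  (is_derive_cplx_cexp lp s) (is_derive_cplx_cexp lm s).
by rewrite RCM (forced_mode_ode _ _ _ _).2.
Qed.

Lemma forced_mode_at0 : X 0 = 0 /\ V 0 = 0.
Proof. by rewrite !cexp0 mulr0 sin0 cos0; exact: mode_at0. Qed.

Lemma forced_mode (z u : R -> R) :
  (forall t : R, is_derive t 1 z (u t)) ->
  (forall t : R, is_derive t 1 u (- z t - mu * u t + f * sin (w * t))) ->
  z 0 = 0 -> u 0 = 0 ->
  forall t : R, RC (z t) = X t /\ RC (u t) = V t.
Proof.
move=> dz du z0 u0; have [X0 V0] := forced_mode_at0.
exact: damped_oscillator_cplx_unique mu_ge0 is_derive_cplx_mode_x is_derive_cplx_mode_v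
  dz du X0 V0 z0 u0.
Qed.

End ForcedMode.

Section ModalReduction.
Variables (R : realType) (n : nat).
Implicit Types (L Phi : 'M[R]_n) (x : 'cV[R]_n).

Lemma Gmx_mul_add_forcing L (h : 'I_n) (F0 w t : R) (y : 'cV[R]_(n + n)) :
  Gmx L *m y + forcing h F0 w t =
  col_mx (dsubmx y) (- usubmx y - L *m dsubmx y + (F0 * sin (w * t)) *: delta_mx h 0).
Proof.
rewrite /Gmx /forcing -{1}[y]vsubmxK mul_block_col add_col_mx.
by rewrite mul0mx mul1mx add0r addr0 mulNmx mul1mx mulNmx.
Qed.

Lemma eigenbasis_trmx_mul L Phi (mu : 'I_n -> R) :
  L^T = L -> (forall i, L *m col i Phi = mu i *: col i Phi) ->
  Phi^T *m L = diag_mx (\row_i mu i) *m Phi^T.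
Proof.
move=> L_sym Leig.
have LPhi : L *m Phi = Phi *m diag_mx (\row_i mu i).
  apply/matrixP => j i; rewrite mul_mx_diag !mxE mulrC.
  have := congr1 (fun v : 'cV[R]_n => v j 0) (Leig i); rewrite !mxE => <-.
  by apply: eq_bigr => k _; rewrite mxE.
by rewrite -[L]L_sym -trmx_mul LPhi trmx_mul tr_diag_mx.
Qed.

Lemma trmx_col_mul_col Phi i : Phi^T *m Phi = 1%:M -> (col i Phi)^T *m col i Phi = 1%:M.
Proof.
move=> PhiO; apply/matrixP => a b; rewrite !ord1 !mxE /=.
have := congr1 (fun M : 'M[R]_n => M i i) PhiO; rewrite !mxE eqxx => <-.
by apply: eq_bigr => k _; rewrite !mxE.
Qed.

Lemma cvC_eigen_expansion Phi x :
  Phi *m Phi^T = 1%:M -> cvC x = \sum_i RC ((Phi^T *m x) i 0) *: cvC (col i Phi).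
Proof.
move=> PhiO; apply/matrixP => a b; rewrite ord1 summxE !mxE.
under eq_bigr do rewrite !mxE -RCM.
rewrite -RC_sum -[x in LHS]mul1mx -PhiO -mulmxA /RC [in LHS]mxE.
congr Complex; apply: eq_bigr => i _; by rewrite mxE mulrC.
Qed.

Lemma modal_oscillator L Phi (mu : 'I_n -> R) (h : 'I_n) (F0 w : R)
    (y : R -> 'cV[R]_(n + n)) i :
  Phi^T *m L = diag_mx (\row_i mu i) *m Phi^T ->
  (forall t : R, is_derive t 1 y (Gmx L *m y t + forcing h F0 w t)) ->
  let z s := (Phi^T *m usubmx (y s)) i 0 in
  let u s := (Phi^T *m dsubmx (y s)) i 0 in
  (forall t : R, is_derive t 1 z (u t)) /\
  (forall t : R, is_derive t 1 u (- z t - mu i * u t + F0 * Phi h i * sin (w * t))).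
Proof.
move=> Ldiag dy z u; split => t.
  have := is_derive_mulmxl Phi^T (is_derive_usubmx (dy t)).
  by rewrite Gmx_mul_add_forcing col_mxKu => /is_derive_mxP; apply.
have := is_derive_mulmxl Phi^T (is_derive_dsubmx (dy t)).
rewrite Gmx_mul_add_forcing col_mxKd => /is_derive_mxP /(_ i 0).
rewrite mulmxDr mulmxBr mulmxN mulmxA Ldiag -mulmxA -scalemxAr -colE mul_diag_mx.
by rewrite /z /u !mxE => /is_derive_eq; apply; ring.
Qed.

End ModalReduction.

Theorem proposition4 (R : realType) (n : nat) (A : 'M[R]_n)
  (Phi : 'M[R]_n) (mu : 'I_n -> R) (xi : 'I_n -> R[i])
  (h : 'I_n) (F0 w : R) (y : R -> 'cV[R]_(n + n)) :
  is_simple_adjacency A ->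
  graph_connected A ->
  (* the columns phi_i := col i Phi form an orthonormal basis of R^n *)
  Phi^T *m Phi = 1%:M ->
  (* L phi_i = mu_i phi_i *)
  (forall i, laplacian A *m col i Phi = mu i *: col i Phi) ->
  (forall i, mu i != 2) ->
  (* xi_i is a complex square root of mu_i^2 - 4 *)
  (forall i, xi i ^+ 2 = RC (mu i ^+ 2 - 4)) ->
  0 < w -> w != 1 ->
  (* y solves y' = G y + b(t), y(0) = 0 *)
  (forall t : R, is_derive t (1 : R) y (Gmx (laplacian A) *m y t + forcing h F0 w t)) ->
  y 0 = 0 ->
  let lp i := (xi i - RC (mu i)) / 2 in
  let lm i := - ((xi i + RC (mu i)) / 2) in
  let W := RC w in
  forall t : R,
  let S := RC (sin (w * t)) in
  let Co := RC (cos (w * t)) in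
  let T := RC t in
  cvC (usubmx (y t)) =
    \sum_(i < n) (RC (F0 * Phi h i) / xi i *
      ( ((1 - lm i ^+ 2) / (xi i * (W ^+ 2 + lm i ^+ 2))
         + (1 - lp i ^+ 2) / (xi i * (W ^+ 2 + lp i ^+ 2))) * S
      + (1 / (W ^+ 2 + lm i ^+ 2) - 1 / (W ^+ 2 + lp i ^+ 2)) * W * Co
      + W * cexp (lp i * T) / (W ^+ 2 + lp i ^+ 2)
      - W * cexp (lm i * T) / (W ^+ 2 + lm i ^+ 2))) *: cvC (col i Phi)
  /\
  cvC (dsubmx (y t)) =
    \sum_(i < n) (RC (F0 * Phi h i) / xi i *
      ( (lm i * (1 - lm i ^+ 2) / (xi i * (W ^+ 2 + lm i ^+ 2))
         + lp i * (1 - lp i ^+ 2) / (xi i * (W ^+ 2 + lp i ^+ 2))) * S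
      + (lm i / (W ^+ 2 + lm i ^+ 2) - lp i / (W ^+ 2 + lp i ^+ 2)) * W * Co
      + W * lp i * cexp (lp i * T) / (W ^+ 2 + lp i ^+ 2)
      - W * lm i * cexp (lm i * T) / (W ^+ 2 + lm i ^+ 2))) *: cvC (col i Phi).
Proof.
move=> [A01 [A_symE _]] _ PhiO Leig mu_neq2 xi_sqr w_gt0 w_neq1 dy y0 lp lm W t S Co T.
have A_sym : A^T = A by apply/matrixP => i j; rewrite mxE A_symE.
have A_ge0 i j : 0 <= A i j by case: (A01 i j) => ->; rewrite ?lexx ?ler01.
have mu_ge0 i : 0 <= mu i.
  by have /(_ _ (Leig i)) := laplacian_eigenvalue_ge0 A_sym A_ge0 (trmx_col_mul_col i PhiO).
have Ldiag := eigenbasis_trmx_mul (laplacian_sym A_sym) Leig.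
have y0_modes i : (Phi^T *m usubmx (y 0)) i 0 = 0 /\ (Phi^T *m dsubmx (y 0)) i 0 = 0.
  by rewrite y0 -[0]col_mx0 col_mxKu col_mxKd mulmx0 mxE.
have modes i := forced_mode (mu_ge0 i) (mu_neq2 i) (xi_sqr i) w_gt0 w_neq1
  (modal_oscillator i Ldiag dy).1 (modal_oscillator i Ldiag dy).2
  (y0_modes i).1 (y0_modes i).2 t.
rewrite !(cvC_eigen_expansion _ (mulmx1C PhiO)).
by split; apply: eq_bigr => i _; congr (_ *: _); [exact: (modes i).1|exact: (modes i).2].
Qed.
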